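(* Let $R\subset S$ be a distributive FCP ring extension with Loewy series $\{S_i\}_{i=0}^n$. Then: (1) $\pounds[R,S]=\ell[R,S]$ if and only if $[R,S]$ is a chain; in this case $[R,S]=\{S_i\}_{i=0}^n$. (2) $\pounds[R,S]=1$ if and only if $R\subset S$ is Boolean.
   Context: All rings are commutative with identity. $[R,S]$ is the lattice of $R$-subalgebras of $S$ (meet = intersection, join = product). FCP: every chain in $[R,S]$ is finite. $T\subset U$ minimal means $[T,U]=\{T,U\}$; atoms of $[R,S]$ are $T$ with $R\subset T$ minimal; the socle $\mathcal S[R,S]$ is the product of all atoms. Loewy series: $S_0=R$, $S_{i+1}=\mathcal S[S_i,S]$ while $S_i\neq S$; $\pounds[R,S]$ is the least $n$ with $S_n=S$. $\ell[R,S]$ is the supremum of lengths of chains in $[R,S]$. Distributive: $[R,S]$ is a distributive lattice; Boolean: distributive and every $T\in[R,S]$ has a complement $T'$ ($T\cap T'=R$, $TT'=S$). *)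

From HB Require Import structures.
From mathcomp Require Import all_boot all_algebra.
From mathcomp Require Import boolp classical_sets cardinality.
Set Implicit Arguments. Unset Strict Implicit. Unset Printing Implicit Defensive.
Import GRing.Theory.
Local Open Scope ring_scope.
Local Open Scope classical_set_scope.

Section RingExt.
Variable S : comNzRingType.

Definition is_subring (T : set S) : Prop :=
  T 1 /\ (forall x y, T x -> T y -> T (x - y)) /\ (forall x y, T x -> T y -> T (x * y)).

(* T is an element of [R,S], i.e. an R-subalgebra of S (S is the whole type) *)
Definition interm (R T : set S) : Prop := is_subring T /\ R `<=` T.

Definition gen (X : set S) : set S :=
  \bigcap_(U in [set U | is_subring U /\ X `<=` U]) U.

(* join in [R,S]: the product TU *)
Definition ring_prod (T U : set S) : set S := gen (T `|` U).

Definition minimal_ext (T U : set S) : Prop :=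
  T `<` U /\ forall V, interm T V -> V `<=` U -> V = T \/ V = U.

Definition atom (R T : set S) : Prop := interm R T /\ minimal_ext R T.

(* socle of [R,S]: product of all atoms (R if there is none) *)
Definition socle (R : set S) : set S :=
  gen (R `|` \bigcup_(T in [set T | atom R T]) T).

(* Loewy series: S_0 = R, S_{i+1} = socle [S_i, S] (stationary at S once reached) *)
Fixpoint loewy (R : set S) (i : nat) : set S :=
  match i with 0 => R | i'.+1 => socle (loewy R i') end.

Definition loewy_length (R : set S) (n : nat) : Prop :=
  loewy R n = setT /\ forall m, loewy R m = setT -> (n <= m)%N.

Definition has_chain_of_length (R : set S) (k : nat) : Prop :=
  exists f : nat -> set S, (forall i, (i <= k)%N -> interm R (f i)) /\
                           (forall i, (i < k)%N -> f i `<` f i.+1).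

Definition lattice_length (R : set S) (l : nat) : Prop :=
  has_chain_of_length R l /\ forall k, has_chain_of_length R k -> (k <= l)%N.

Definition FCP (R : set S) : Prop :=
  forall C : set (set S), C `<=` interm R ->
    (forall A B, C A -> C B -> A `<=` B \/ B `<=` A) -> finite_set C.

Definition is_chain_lattice (R : set S) : Prop :=
  forall T U, interm R T -> interm R U -> T `<=` U \/ U `<=` T.

(* [R,S] distributive (meet = intersection, join = product) *)
Definition distributive_ext (R : set S) : Prop :=
  forall T U V, interm R T -> interm R U -> interm R V ->
    T `&` ring_prod U V = ring_prod (T `&` U) (T `&` V).

Definition boolean_ext (R : set S) : Prop :=
  distributive_ext R /\
  forall T, interm R T -> exists T', interm R T' /\ T `&` T' = R /\ ring_prod T T' = setT.

End RingExt.

(* The Loewy series S_0 < ... < S_n is a chain of [R,S], so n <= l.  If every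
   T in [R,S] properly containing S_i contains S_(i+1), then an induction on i
   shows that every T is one of the S_i.  When [R,S] is a chain this holds since
   S_(i+1) is generated by the atoms over S_i, each comparable with T and hence
   below it; so [R,S] = {S_i} and n = l.  When n = l the Loewy series cannot be
   refined, so S_(i+1) is the only atom over S_i; it lies below every T properly
   containing S_i, since such a T contains an atom over S_i.

   For (2), n = 1 means that the atoms generate S.  A maximal T' with
   T ∩ T' = R is then a complement of T: for an atom a not below T we have
   T ∩ a = R, so distributivity gives T ∩ T'a = R and maximality puts a in T'.
   Conversely, a complement of the socle contains no atom, so it is R and the
   socle is S. *)

From HB Require Import structures.
From mathcomp Require Import all_boot all_algebra.
From mathcomp Require Import boolp classical_sets cardinality.
From mathcomp Require Import zify.
Set Implicit Arguments. Unset Strict Implicit. Unset Printing Implicit Defensive.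
Local Open Scope classical_set_scope.

Section BoundedChains.
Variables (T : Type) (lt : T -> T -> Prop) (P : set T) (l : nat).
Hypothesis no_long_chain : forall f : nat -> T,
  (forall i, (i <= l.+1)%N -> P (f i)) -> ~ (forall i, (i < l.+1)%N -> lt (f i) (f i.+1)).

Lemma bounded_chains_maximal (Q : set T) x0 : Q `<=` P -> Q x0 ->
  exists2 x, Q x & forall y, Q y -> ~ lt x y.
Proof.
move=> QP Qx0; apply: contrapT => nomax.
have grow k : exists f : nat -> T,
    (forall i, (i <= k)%N -> Q (f i)) /\ (forall i, (i < k)%N -> lt (f i) (f i.+1)).
  elim: k => [|k [f [Qf ltf]]]; first by exists (fun=> x0).
  have [y Qy lty] : exists2 y, Q y & lt (f k) y.
    apply: contrapT => noy; apply: nomax; exists (f k) => [|y Qy lty]; first exact: Qf.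
    by apply: noy; exists y.
  exists (fun i => if (i <= k)%N then f i else y); split.
    by move=> i _; case: ifP => ik; [exact: Qf|exact: Qy].
  move=> i; rewrite ltnS => ik; rewrite ik; case: ifP => ik1; first exact: ltf.
  by have -> : i = k by lia.
have [f [Qf ltf]] := grow l.+1.
by apply: (@no_long_chain f) => // i il; apply/QP/Qf.
Qed.

End BoundedChains.

Section Subrings.
Variable S : comNzRingType.
Implicit Types R T U V X : set S.

Lemma gen_min X U : is_subring U -> X `<=` U -> gen X `<=` U.
Proof. by move=> HU XU x; apply. Qed.

Lemma sub_gen X : X `<=` gen X.
Proof. by move=> x Xx U [_ XU]; apply: XU. Qed.

Lemma gen_subring X : is_subring (gen X).
Proof.
split; [by move=> U [[]]|split] => x y gx gy U HU; have [[_ [UB UM]] _] := HU.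
  by apply: UB; [exact: gx U HU|exact: gy U HU].
by apply: UM; [exact: gx U HU|exact: gy U HU].
Qed.

Lemma gen_id X : is_subring X -> gen X = X.
Proof. by move=> HX; apply/seteqP; split; [exact: gen_min|exact: sub_gen]. Qed.

Lemma subringI T U : is_subring T -> is_subring U -> is_subring (T `&` U).
Proof.
move=> [T1 [TB TM]] [U1 [UB UM]]; split; [|split] => //.
  by move=> x y [? ?] [? ?]; split; [apply: TB|apply: UB].
by move=> x y [? ?] [? ?]; split; [apply: TM|apply: UM].
Qed.

Lemma interm_refl R : is_subring R -> interm R R.
Proof. by split. Qed.

Lemma interm_trans R U V : interm R U -> interm U V -> interm R V.
Proof. by move=> [_ RU] [HV UV]; split => // x /RU /UV. Qed.

Lemma ring_prod_subl T U : T `<=` ring_prod T U.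
Proof. by move=> x Tx; apply: sub_gen; left. Qed.

Lemma ring_prod_subr T U : U `<=` ring_prod T U.
Proof. by move=> x Ux; apply: sub_gen; right. Qed.

Lemma ring_prod_absorb T U : is_subring T -> U `<=` T -> ring_prod T U = T.
Proof. by move=> HT UT; rewrite /ring_prod setUidl // gen_id. Qed.

Lemma interm_ring_prod R T U : R `<=` T -> interm R (ring_prod T U).
Proof. by move=> RT; split; [exact: gen_subring|move=> x /RT /ring_prod_subl]. Qed.

End Subrings.

Section Socle.
Variable S : comNzRingType.
Implicit Types R T U a : set S.

Lemma socle_sub R : R `<=` socle R.
Proof. by move=> x Rx; apply: sub_gen; left. Qed.

Lemma atom_sub_socle R a : atom R a -> a `<=` socle R.
Proof. by move=> Ha x ax; apply: sub_gen; right; exists a. Qed.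

Lemma socle_min R U : is_subring U -> R `<=` U ->
  (forall a, atom R a -> a `<=` U) -> socle R `<=` U.
Proof. by move=> HU RU aU; apply: gen_min => // x [/RU //|[a /aU]]; apply. Qed.

Lemma interm_socle R : is_subring R -> interm R (socle R).
Proof. by move=> HR; split; [exact: gen_subring|exact: socle_sub]. Qed.

Lemma atom_sub_or_meet R a T : atom R a -> interm R T -> a `<=` T \/ T `&` a = R.
Proof.
move=> [[Ha Ra] [_ amin]] [HT RT].
have HTa : interm R (T `&` a).
  by split; [exact: subringI|move=> x Rx; split; [exact: RT|exact: Ra]].
by case: (amin _ HTa (@subIsetr _ _ _)) => [|/setIidPr]; [right|left].
Qed.

End Socle.

Section Loewy.
Variables (S : comNzRingType) (R : set S).

Lemma loewy_interm i : is_subring R -> interm R (loewy R i).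
Proof.
move=> HR; elim: i => [|i IH]; first exact: interm_refl.
exact: interm_trans IH (interm_socle IH.1).
Qed.

Lemma loewy_mono i j : (i <= j)%N -> loewy R i `<=` loewy R j.
Proof.
elim: j => [|j IH]; first by rewrite leqn0 => /eqP ->.
rewrite leq_eqVlt => /orP [/eqP -> //|]; rewrite ltnS => /IH ij x /ij.
exact: socle_sub.
Qed.

Lemma loewy_stationary i j : loewy R i.+1 = loewy R i -> (i <= j)%N ->
  loewy R j = loewy R i.
Proof.
move=> Ei; elim: j => [|j IH]; first by rewrite leqn0 => /eqP ->.
by rewrite leq_eqVlt => /orP [/eqP <- //|]; rewrite ltnS => /IH /= ->.
Qed.

Variable n : nat.

Lemma chain_in_loewy_le k (f : nat -> set S) :
  (forall i, (i <= k)%N -> exists2 j, (j <= n)%N & f i = loewy R j) ->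
  (forall i, (i < k)%N -> f i `<` f i.+1) -> (k <= n)%N.
Proof.
move=> inLoewy incr.
have index_ge i : (i <= k)%N -> exists2 j, (i <= j <= n)%N & f i = loewy R j.
  elim: i => [|i IH] ik; first by have [j jn ->] := inLoewy 0%N ik; exists j.
  have [j /andP [ij jn] fi] := IH (ltnW ik).
  have [j' j'n fi1] := inLoewy _ ik; exists j' => //; rewrite j'n andbT.
  apply: leq_ltn_trans ij _; rewrite ltnNge; apply/negP => j'j.
  by case: (incr i ik); rewrite fi fi1 => _; apply; apply: loewy_mono.
by have [j /andP [kj jn] _] := index_ge k (leqnn k); exact: leq_trans kj jn.
Qed.

Hypothesis Hn : loewy_length R n.

Lemma loewy_setT i : (n <= i)%N -> loewy R i = setT.
Proof. by move=> ni; apply/seteqP; split => // x _; apply: (loewy_mono ni); rewrite Hn.1. Qed.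

Lemma loewy_proper i : (i < n)%N -> loewy R i `<` loewy R i.+1.
Proof.
move=> iltn; split => [|Si1i]; first exact: socle_sub.
have Ei : loewy R i.+1 = loewy R i by apply/seteqP; split => //; exact: socle_sub.
have := Hn.2 i; rewrite -(loewy_stationary Ei (ltnW iltn)) Hn.1 => /(_ erefl).
by rewrite leqNgt iltn.
Qed.

Lemma loewy_chain : is_subring R -> has_chain_of_length R n.
Proof.
by move=> HR; exists (loewy R); split => i; [move=> _; exact: loewy_interm|exact: loewy_proper].
Qed.

Lemma loewy_length_eq1 : R `<` setT -> (n = 1%N <-> socle R = setT).
Proof.
move=> [_ SR]; split => [n1|socT]; first by have := Hn.1; rewrite n1.
apply/eqP; rewrite eqn_leq (Hn.2 1%N socT) lt0n; apply/eqP => n0.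
by apply: SR; have := Hn.1; rewrite n0 /= => ->.
Qed.

Lemma loewy_exhaustive : is_subring R ->
  (forall i T, interm R T -> loewy R i `<` T -> loewy R i.+1 `<=` T) ->
  forall T, interm R T -> exists2 i, (i <= n)%N & T = loewy R i.
Proof.
move=> HR succ_min T HT.
have below i : loewy R i `<=` T \/ exists2 j, (j < i)%N & T = loewy R j.
  elim: i => [|i [SiT|[j ji ->]]]; first by left; exact: HT.2.
    have [->|TneSi] := pselect (T = loewy R i); first by right; exists i.
    by left; apply: succ_min => //; split => // TSi; apply/TneSi/seteqP.
  by right; exists j => //; exact: ltnW.
have [SnT|[j jn ->]] := below n; last by exists j => //; exact: ltnW.
by exists n => //; apply/seteqP; split => //; rewrite Hn.1.
Qed.

End Loewy.

Lemma chain_insert (S : comNzRingType) (R : set S) (f : nat -> set S) k i V :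
  (forall j, (j <= k)%N -> interm R (f j)) -> (forall j, (j < k)%N -> f j `<` f j.+1) ->
  (i < k)%N -> interm R V -> f i `<` V -> V `<` f i.+1 -> has_chain_of_length R k.+1.
Proof.
move=> Rf incr ik RV fiV Vfi.
exists (fun j => if (j <= i)%N then f j else if j == i.+1 then V else f j.-1); split.
  move=> j jk; case: ifP => [ji|_]; first by apply: Rf; lia.
  by case: ifP => // _; apply: Rf; lia.
move=> j jk; case: (ltngtP j i) => [ji|ij|->]; [by apply: incr; lia| |by rewrite eqxx].
rewrite eqSS (gtn_eqF ij); have [-> //|ji1] := eqVneq j i.+1.
by move: (incr j.-1); rewrite prednK; [apply; lia|lia].
Qed.

Section FiniteLength.
Variables (S : comNzRingType) (R : set S) (l : nat).
Hypothesis Hl : lattice_length R l.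

Lemma no_chain_longer (f : nat -> set S) : (forall i, (i <= l.+1)%N -> interm R (f i)) ->
  ~ (forall i, (i < l.+1)%N -> f i `<` f i.+1).
Proof. by move=> Rf incr; have := Hl.2 _ (ex_intro _ f (conj Rf incr)); rewrite ltnn. Qed.

Lemma no_decreasing_chain_longer (f : nat -> set S) :
  (forall i, (i <= l.+1)%N -> interm R (f i)) -> ~ (forall i, (i < l.+1)%N -> f i.+1 `<` f i).
Proof.
move=> Rf decr; apply: (@no_chain_longer (fun i => f (l.+1 - i))) => [i _|i il].
  by apply: Rf; lia.
have -> : (l.+1 - i = (l - i).+1)%N by lia.
by rewrite subSS; apply: decr; lia.
Qed.

Lemma interm_maximal (Q : set (set S)) V0 : Q `<=` interm R -> Q V0 ->
  exists2 V, Q V & forall V', Q V' -> V `<=` V' -> V' = V.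
Proof.
move=> QR QV0.
have [V QV Vmax] := @bounded_chains_maximal _ proper _ _ no_chain_longer _ _ QR QV0.
exists V => // V' QV' VV'; apply/seteqP; split => //; apply: contrapT => V'V.
exact: (Vmax V' QV').
Qed.

Lemma interm_minimal (Q : set (set S)) V0 : Q `<=` interm R -> Q V0 ->
  exists2 V, Q V & forall V', Q V' -> V' `<=` V -> V' = V.
Proof.
move=> QR QV0.
have [V QV Vmin] := @bounded_chains_maximal _ (fun A B => B `<` A) _ _
  no_decreasing_chain_longer _ _ QR QV0.
exists V => // V' QV' V'V; apply/seteqP; split => //; apply: contrapT => VV'.
exact: (Vmin V' QV').
Qed.

Lemma atom_exists B T : interm R B -> is_subring T -> B `<` T ->
  exists2 a, atom B a & a `<=` T.
Proof.
move=> RB HT BT.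
pose Q V := is_subring V /\ B `<` V /\ V `<=` T.
have QR : Q `<=` interm R.
  by move=> V [HV [BV _]]; apply: interm_trans RB (conj HV (properW BV)).
have [a [Ha [Ba aT]] amin] := interm_minimal QR (conj HT (conj BT (@subset_refl _ T))).
exists a => //; split; first by split => //; exact: properW.
split => // W [HW BW] Wa.
have [->|WneB] := pselect (W = B); [by left|right].
apply: amin => //; split => //; split; last exact: subset_trans Wa aT.
by split => // WB; apply/WneB/seteqP.
Qed.

End FiniteLength.

Section LoewyChain.
Variables (S : comNzRingType) (R : set S) (n : nat).
Hypotheses (HR : is_subring R) (Hn : loewy_length R n).

Lemma chain_loewy_succ_min : is_chain_lattice R ->
  forall i T, interm R T -> loewy R i `<` T -> loewy R i.+1 `<=` T.
Proof.
move=> chainR i T RT [SiT TSi]; apply: socle_min => // [|a Ha]; first exact: RT.1.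
have [//|Ta] := chainR a T (interm_trans (loewy_interm i HR) Ha.1) RT.
have [TSi'|<- //] := Ha.2.2 T (conj RT.1 SiT) Ta.
by case: TSi; rewrite TSi'.
Qed.

Lemma chain_lattice_loewy : is_chain_lattice R ->
  forall T, interm R T <-> exists2 i, (i <= n)%N & T = loewy R i.
Proof.
move=> chainR T; split; first exact: loewy_exhaustive Hn HR (chain_loewy_succ_min chainR) T.
by case=> i _ ->; exact: loewy_interm.
Qed.

Lemma chain_lattice_length l : is_chain_lattice R -> lattice_length R l -> n = l.
Proof.
move=> chainR Hl; apply/eqP; rewrite eqn_leq (Hl.2 _ (loewy_chain Hn HR)) /=.
have [[f [Rf incr]] _] := Hl.
by apply: (chain_in_loewy_le (f := f)) incr => i il; apply/(chain_lattice_loewy chainR)/Rf.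
Qed.

Lemma length_loewy_succ_min l : lattice_length R l -> n = l ->
  forall i T, interm R T -> loewy R i `<` T -> loewy R i.+1 `<=` T.
Proof.
move=> Hl nl i T RT SiT.
have iltn : (i < n)%N.
  by rewrite ltnNge; apply/negP => /(loewy_setT Hn) Si; case: SiT => _; apply; rewrite Si.
have [a Ha aT] := atom_exists Hl (loewy_interm i HR) RT.1 SiT.
suff -> : loewy R i.+1 = a by [].
apply/seteqP; split; last exact: atom_sub_socle.
apply: contrapT => Si1a.
have := Hl.2 _ (chain_insert (fun j _ => loewy_interm j HR) (loewy_proper Hn) iltn
  (interm_trans (loewy_interm i HR) Ha.1) Ha.2.1 (conj (atom_sub_socle Ha) Si1a)).
by rewrite -nl ltnn.
Qed.

Lemma length_chain_lattice l : lattice_length R l -> n = l -> is_chain_lattice R.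
Proof.
move=> Hl nl T U RT RU.
have [i _ ->] := loewy_exhaustive Hn HR (length_loewy_succ_min Hl nl) RT.
have [j _ ->] := loewy_exhaustive Hn HR (length_loewy_succ_min Hl nl) RU.
by case/orP: (leq_total i j) => ij; [left|right]; apply: loewy_mono.
Qed.

End LoewyChain.

Section Boolean.
Variables (S : comNzRingType) (R : set S) (l : nat).
Hypotheses (HR : is_subring R) (Hl : lattice_length R l).

Lemma socle_setT_boolean : distributive_ext R -> socle R = setT -> boolean_ext R.
Proof.
move=> distrR socT; split => // T RT.
have [V [RV TV] Vmax] := interm_maximal Hl (Q := fun V => interm R V /\ T `&` V = R)
  (fun _ => @proj1 _ _) (conj (interm_refl HR) (setIidr RT.2)).
exists V; split => //; split => //.
apply/seteqP; split => //; rewrite -socT; apply: socle_min.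
- exact: gen_subring.
- by move=> x /RT.2 /ring_prod_subl.
- move=> a Ha; have [aT|Ta] := atom_sub_or_meet Ha RT; first by move=> x /aT /ring_prod_subl.
  have Va : ring_prod V a = V.
    apply: Vmax; last exact: ring_prod_subl.
    split; first exact: interm_ring_prod RV.2.
    by rewrite (distrR _ _ _ RT RV Ha.1) TV Ta ring_prod_absorb.
  by move=> x ax; apply: ring_prod_subr; rewrite -Va; apply: ring_prod_subr.
Qed.

Lemma boolean_socle_setT : boolean_ext R -> socle R = setT.
Proof.
move=> [_ complR]; have [M [RM [socM socMT]]] := complR _ (interm_socle HR).
suff MR : M = R.
  by rewrite -socMT MR ring_prod_absorb //; [exact: gen_subring|exact: socle_sub].
apply: contrapT => MneR.
have RltM : R `<` M.
  by split=> [|MR]; [exact: RM.2|apply/MneR/seteqP; split => //; exact: RM.2].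
have [a Ha aM] := atom_exists Hl (interm_refl HR) RM.1 RltM.
case: Ha.2.1 => _; apply; rewrite -socM => x ax.
exact: conj (atom_sub_socle Ha ax) (aM x ax).
Qed.

End Boolean.

Theorem corollary8p31 (S : comNzRingType) (R : set S) (n l : nat) :
  is_subring R -> R `<` [set: S] ->
  distributive_ext R -> FCP R ->
  loewy_length R n -> lattice_length R l ->
  ((n = l <-> is_chain_lattice R) /\
   (is_chain_lattice R -> forall T, interm R T <-> exists2 i, (i <= n)%N & T = loewy R i)) /\
  (n = 1%N <-> boolean_ext R).
Proof.
move=> HR RS distrR _ Hn Hl.
split; first split; first split.
- exact: (length_chain_lattice HR Hn Hl).
- by move/(chain_lattice_length HR Hn); apply.
- exact: chain_lattice_loewy HR Hn.
rewrite (loewy_length_eq1 Hn RS).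
by split; [exact: socle_setT_boolean HR Hl distrR|exact: boolean_socle_setT HR Hl].
Qed.
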